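(* Let $f(\mathbf{x})=\mathbf{x}^{T}A\mathbf{x}+b^{T}\mathbf{x}+1$ be a polynomial of degree $2$ ($A\in\mathbb{R}^{n\times n}$ symmetric, $A\neq0$, $b\in\mathbb{R}^n$) which admits a monic determinantal representation $f(\mathbf{x})=\det(I_k+L(\mathbf{x}))$, $L(\mathbf{x})=x_1A_1+\dots+x_nA_n$, with Hermitian (or real symmetric) $k\times k$ matrices $A_j$. Then the spectrahedron $S=\{\mathbf{x}\in\mathbb{R}^n: I_k+L(\mathbf{x})\succeq 0\}$ does not contain a full dimensional cone if and only if $A$ is negative semidefinite.
   Context: For $f(\mathbf{x})=\det(I+L(\mathbf{x}))$ of degree $d$, the spectrahedron $S=\{\mathbf{x}: I+L(\mathbf{x})\succeq 0\}$ is said to contain a full dimensional cone if there exists $\mathbf{x}\in\mathbb{R}^n$ such that $L(\mathbf{x})\succeq 0$ and $\operatorname{rank}L(\mathbf{x})=d$. *)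

(* Scalars live in a numeric closed field C (e.g. the complex
   numbers); "real" means Num.real, conjugation is Num.conj. *)
From HB Require Import structures.
From mathcomp Require Import all_boot all_order all_algebra.
Set Implicit Arguments. Unset Strict Implicit. Unset Printing Implicit Defensive.
Import Order.TTheory GRing.Theory Num.Theory.
Local Open Scope ring_scope.

Definition real_entries (C : numClosedFieldType) m n (M : 'M[C]_(m, n)) : Prop :=
  forall i j, M i j \is Num.real.

Definition herm_mx (C : numClosedFieldType) k (M : 'M[C]_k) : Prop :=
  M = (map_mx (fun z => z^*) M)^T.

Definition psd_mx (C : numClosedFieldType) k (M : 'M[C]_k) : Prop :=
  herm_mx M /\
  forall v : 'cV[C]_k, 0 <= ((map_mx (fun z => z^*) v)^T *m M *m v) 0 0.

Definition nsd_mx (C : numClosedFieldType) n (A : 'M[C]_n) : Prop :=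
  forall v : 'cV[C]_n, real_entries v -> (v^T *m A *m v) 0 0 <= 0.

Definition linpencil (C : numClosedFieldType) n k (As : 'I_n -> 'M[C]_k)
  (x : 'cV[C]_n) : 'M[C]_k := \sum_(j < n) x j 0 *: As j.

Definition quadpoly (C : numClosedFieldType) n (A : 'M[C]_n) (b : 'cV[C]_n)
  (x : 'cV[C]_n) : C := (x^T *m A *m x) 0 0 + (b^T *m x) 0 0 + 1.

(* S contains a full dimensional cone (d = degree of f) *)
Definition contains_full_cone (C : numClosedFieldType) n k
  (As : 'I_n -> 'M[C]_k) (d : nat) : Prop :=
  exists x : 'cV[C]_n, real_entries x /\ psd_mx (linpencil As x) /\ \rank (linpencil As x) = d.

From HB Require Import structures.
From mathcomp Require Import all_boot all_order all_algebra.
From mathcomp Require Import sesquilinear spectral ring zify.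
Import Order.TTheory GRing.Theory Num.Theory.
Local Open Scope ring_scope.
Set Implicit Arguments. Unset Strict Implicit. Unset Printing Implicit Defensive.

(* For real [x], [L(x)] is Hermitian, so [f(t x) = det (I + t L(x))] equals
   [prod_i (1 + t d_i)] over the (real) eigenvalues [d_i] of [L(x)].  Comparing
   with [f(t x) = t^2 x^T A x + t b^T x + 1] for infinitely many [t], [L(x)] has
   exactly two nonzero eigenvalues when [x^T A x != 0], whose product is then
   [x^T A x], and at most one otherwise.  A positive semidefinite [L(x)] of rank 2
   therefore forces [x^T A x > 0]; conversely, if [x^T A x > 0] the two nonzero
   eigenvalues share a sign, and rescaling [x] by one of them makes [L] positive
   semidefinite of rank 2. *)

Definition diag_support (F : fieldType) k (d : 'rV[F]_k) := [set i | d 0 i != 0].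

Lemma mxrank_diag (F : fieldType) k (d : 'rV[F]_k) :
  \rank (diag_mx d) = #|diag_support d|.
Proof.
apply/eqP; rewrite eqn_leq; apply/andP; split.
- have -> : diag_mx d = \sum_(i in diag_support d) d 0 i *: delta_mx i i.
    rewrite diag_mx_sum_delta (bigID (mem (diag_support d))) /=.
    rewrite [X in _ + X]big1 ?addr0 // => i; rewrite inE negbK => /eqP->.
    by rewrite scale0r.
  rewrite -sum1_card.
  elim/big_ind2: _ => [|X1 m1 X2 m2 h1 h2|i _]; first by rewrite mxrank0.
  + by apply: leq_trans (mxrank_add _ _) _; exact: leq_add.
  + by apply: leq_trans (mxrank_scale _ _) _; rewrite mxrank_delta.
- pose f : 'I_#|diag_support d| -> 'I_k := enum_val.
  have sub_unit : mxsub f f (diag_mx d) \in unitmx.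
    have -> : mxsub f f (diag_mx d) = diag_mx (\row_r d 0 (f r)).
      by apply/matrixP=> r s; rewrite !mxE (inj_eq enum_val_inj).
    rewrite unitmxE det_diag unitfE; apply/prodf_neq0 => r _.
    by rewrite mxE; have := enum_valP r; rewrite inE.
  rewrite -(mxrank_unit sub_unit) -[diag_mx d]mulmx1 mxsub_mul.
  apply: leq_trans (mxrankM_maxl _ _) _.
  by rewrite mulmx1; apply: mxrankS; apply: rowsub_sub.
Qed.

Lemma diag_supportZ (F : fieldType) k (t : F) (d : 'rV[F]_k) :
  t != 0 -> diag_support (t *: d) = diag_support d.
Proof. by move=> t0; apply/setP=> i; rewrite !inE mxE mulf_eq0 negb_or t0. Qed.

Lemma poly_eq_nat_horner (R : numDomainType) (p q : {poly R}) :
  (forall m : nat, p.[m%:R] = q.[m%:R]) -> p = q.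
Proof.
move=> pq; apply/eqP; rewrite -subr_eq0; apply/eqP.
apply: (@roots_geq_poly_eq0 _ _ [seq m%:R | m <- iota 0 (size (p - q))]).
- by apply/allP => _ /mapP [m _ ->]; rewrite /root hornerD hornerN pq subrr.
- by rewrite map_inj_uniq ?iota_uniq // => m1 m2 /eqP; rewrite eqr_nat => /eqP.
- by rewrite size_map size_iota.
Qed.

Lemma size_scaleX_add1 (R : idomainType) (c : R) : c != 0 ->
  size (c *: 'X + 1 : {poly R}) = 2.
Proof.
by move=> c0; rewrite size_polyDl ?size_poly1 // size_scale // size_polyX.
Qed.

Lemma lead_coef_scaleX_add1 (R : idomainType) (c : R) : c != 0 ->
  lead_coef (c *: 'X + 1 : {poly R}) = c.
Proof.
move=> c0; rewrite lead_coefDl ?lead_coefZ ?lead_coefX ?mulr1 //.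
by rewrite size_scale // size_polyX size_poly1.
Qed.

Lemma prod_linear_eq_quadratic (R : numDomainType) (I : finType) (c : I -> R) (a b : R) :
  (forall m : nat, \prod_i (1 + m%:R * c i) = m%:R ^+ 2 * a + m%:R * b + 1) ->
  let S := [set i | c i != 0] in
  a = (\prod_(i in S) c i) *+ (#|S| == 2%N).
Proof.
move=> hc S.
pose p := \prod_(i in S) (c i *: 'X + 1 : {poly R}).
have p_eq : p = Poly [:: 1; b; a].
  apply: poly_eq_nat_horner => m; rewrite horner_Poly /= horner_prod.
  transitivity (\prod_i (1 + m%:R * c i)); last by rewrite hc; ring.
  rewrite [RHS](bigID (mem S)) /= [X in _ = _ * X]big1 ?mulr1 => [|i].
    by apply: eq_bigr => i _; rewrite hornerD hornerZ hornerX hornerC addrC mulrC.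
  by rewrite inE negbK => /eqP->; rewrite mulr0 addr0.
have size_p : size p = #|S|.+1.
  rewrite size_prod => [|i]; last by rewrite inE -size_poly_eq0 => /size_scaleX_add1 ->.
  rewrite (eq_bigr (fun=> 2%N)) => [|i]; last by rewrite inE => /size_scaleX_add1.
  by rewrite sum_nat_const muln2 -addnn -addSn addnK.
have card_le2 : (#|S| <= 2)%N by rewrite -ltnS -size_p p_eq size_Poly.
have -> : a = p`_2 by rewrite p_eq coef_Poly.
have [cardS2|cardS_neq2] := eqVneq #|S| 2%N.
- have <- : lead_coef p = p`_2 by rewrite lead_coefE size_p cardS2.
  rewrite mulr1n lead_coef_prod.
  by apply: eq_bigr => i; rewrite inE => /lead_coef_scaleX_add1.
- rewrite mulr0n nth_default // size_p; lia.
Qed.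

Lemma support2_common_sign (R : numDomainType) (I : finType) (c : I -> R) i :
  let S := [set l | c l != 0] in
  #|S| = 2%N -> i \in S -> c i \is Num.real -> 0 < \prod_(l in S) c l ->
  forall l, 0 <= c i * c l.
Proof.
move=> S cardS iS ci_real prod_gt0 l.
have /cards1P [j defSi] : #|S :\ i| == 1%N.
  by move: cardS; rewrite (cardsD1 i) iS add1n => -[->].
rewrite (big_setD1 i) //= defSi big_set1 in prod_gt0.
have [lS|] := boolP (l \in S); last by rewrite inE negbK => /eqP->; rewrite mulr0.
move: lS; rewrite -(setD1K iS) defSi !inE => /orP[]/eqP->.
- by rewrite -expr2 real_exprn_even_ge0.
- exact: ltW.
Qed.

Local Open Scope sesquilinear_scope.

Lemma herm_mxE (C : numClosedFieldType) k (M : 'M[C]_k) :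
  herm_mx M <-> M \is hermsymmx.
Proof. by rewrite is_hermitianmxE expr0 scale1r /herm_mx map_trmx; split=> /eqP. Qed.

Lemma herm_spectral_decomp (C : numClosedFieldType) k (M : 'M[C]_k) :
  herm_mx M -> M = (spectralmx M)^t* *m diag_mx (spectral_diag M) *m spectralmx M.
Proof.
move=> /herm_mxE M_herm; rewrite -invmx_unitary ?spectral_unitarymx //.
exact/orthomx_spectralP/hermitian_normalmx.
Qed.

Section UnitaryDiagonalization.
Variables (C : numClosedFieldType) (k : nat) (M P : 'M[C]_k) (d : 'rV[C]_k).
Hypotheses (P_unitary : P \is unitarymx) (defM : M = P^t* *m diag_mx d *m P).

Lemma scale_unitary_diag t : t *: M = P^t* *m diag_mx (t *: d) *m P.
Proof.
rewrite defM scalemxAl scalemxAr; congr (_ *m _ *m _).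
by apply/matrixP=> i j; rewrite !mxE mulrnAr.
Qed.

Lemma mxrank_unitary_diag : \rank M = #|diag_support d|.
Proof.
rewrite defM mxrankMfree ?row_free_unit ?unitarymx_unit // -mxrank_tr trmx_mul.
rewrite mxrankMfree ?mxrank_tr ?mxrank_diag // row_free_unit unitmx_tr.
by rewrite unitarymx_unit // trmxC_unitary.
Qed.

Lemma det_add1_scale_unitary_diag t :
  \det (1%:M + t *: M) = \prod_i (1 + t * d 0 i).
Proof.
have PtP : P^t* *m P = 1%:M by rewrite -invmx_unitary // mulVmx // unitarymx_unit.
have -> : 1%:M + t *: M = P^t* *m diag_mx (\row_i (1 + t * d 0 i)) *m P.
  have -> : diag_mx (\row_i (1 + t * d 0 i)) = 1%:M + t *: diag_mx d.
    by apply/matrixP=> i j; rewrite !mxE; case: (i == j); rewrite ?mulr0 ?addr0.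
  by rewrite mulmxDr mulmxDl mulmx1 PtP defM scalemxAl scalemxAr.
rewrite !det_mulmx det_diag mulrC mulrA -det_mulmx (unitarymxP P_unitary) det1.
by rewrite mul1r; apply: eq_bigr => i _; rewrite mxE.
Qed.

Lemma psd_unitary_diagP : herm_mx M -> psd_mx M <-> forall i, 0 <= d 0 i.
Proof.
move=> M_herm; split=> [[_ psdM] i|d_ge0]; last first.
  split=> // v; set w := P *m v.
  have -> : (map_mx (fun z => z^*) v)^T *m M *m v = w^t* *m diag_mx d *m w.
    by rewrite defM /w -!mulmxA trmx_mul map_mxM map_trmx mulmxA.
  rewrite mul_mx_diag mxE; apply: sumr_ge0 => j _.
  by rewrite !mxE mulrC mulrA mulr_ge0 ?mul_conjC_ge0.
have PPt := unitarymxP P_unitary.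
pose e : 'cV[C]_k := delta_mx i 0.
have := psdM (P^t* *m e).
have -> : map_mx (fun z => z^*) (P^t* *m e) = P^T *m e.
  rewrite map_mxM; congr (_ *m _); apply/matrixP=> r s; rewrite !mxE /=.
    by rewrite conjCK.
  by rewrite conjC_nat.
rewrite defM trmx_mul trmxK -!mulmxA (mulmxA P) PPt mul1mx (mulmxA P) PPt mul1mx.
by rewrite /e trmx_delta -rowE -colE !mxE eqxx mulr1n.
Qed.
End UnitaryDiagonalization.

Lemma real_entriesZ (C : numClosedFieldType) m n (t : C) (X : 'M[C]_(m, n)) :
  t \is Num.real -> real_entries X -> real_entries (t *: X).
Proof. by move=> t_real X_real i j; rewrite mxE rpredM. Qed.

Lemma real_qform (C : numClosedFieldType) n (A : 'M[C]_n) (v : 'cV[C]_n) :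
  real_entries A -> real_entries v -> (v^T *m A *m v) 0 0 \is Num.real.
Proof.
move=> A_real v_real; rewrite !mxE; apply: rpred_sum => i _; rewrite !mxE.
by apply: rpredM => //; apply: rpred_sum => j _; rewrite !mxE rpredM.
Qed.

Lemma quadpolyZ (C : numClosedFieldType) n (A : 'M[C]_n) b t x :
  quadpoly A b (t *: x) = t ^+ 2 * (x^T *m A *m x) 0 0 + t * (b^T *m x) 0 0 + 1.
Proof.
rewrite /quadpoly.
have -> : (t *: x)^T = t *: x^T by apply/matrixP=> i j; rewrite !mxE.
rewrite -!scalemxAl -!scalemxAr !mxE.
by rewrite mulrA expr2.
Qed.

Section Pencil.
Variables (C : numClosedFieldType) (n k : nat) (As : 'I_n -> 'M[C]_k).

Lemma linpencilZ t x : linpencil As (t *: x) = t *: linpencil As x.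
Proof.
rewrite /linpencil scaler_sumr; apply: eq_bigr => j _.
by rewrite mxE scalerA.
Qed.

Hypothesis As_herm : forall j, herm_mx (As j).

Lemma linpencil_herm x : real_entries x -> herm_mx (linpencil As x).
Proof.
move=> x_real; apply/matrixP => i j.
rewrite !mxE /linpencil !summxE rmorph_sum; apply: eq_bigr => l _.
rewrite !mxE rmorphM /= conj_Creal ?x_real //; congr (_ * _).
by rewrite {1}(As_herm l) !mxE.
Qed.

Variables (A : 'M[C]_n) (b : 'cV[C]_n).
Hypothesis representation : forall x : 'cV[C]_n, real_entries x ->
  quadpoly A b x = \det (1%:M + linpencil As x).

Lemma qform_spectral_diag x : real_entries x ->
  let d := spectral_diag (linpencil As x) in
  (x^T *m A *m x) 0 0 = (\prod_(i in diag_support d) d 0 i) *+ (#|diag_support d| == 2%N).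
Proof.
move=> x_real d; apply: (prod_linear_eq_quadratic (b := (b^T *m x) 0 0)) => m.
rewrite -(det_add1_scale_unitary_diag (spectral_unitarymx _)
  (herm_spectral_decomp (linpencil_herm x_real))).
rewrite -linpencilZ -representation ?quadpolyZ //.
by apply: real_entriesZ => //; exact: realn.
Qed.

Lemma full_cone_of_qform_gt0 (v : 'cV[C]_n) : real_entries v -> 0 < (v^T *m A *m v) 0 0 ->
  contains_full_cone As 2.
Proof.
move=> v_real qv_gt0; have qv : _ = _ := qform_spectral_diag v_real.
have decomp := herm_spectral_decomp (linpencil_herm v_real).
set M := linpencil As v in qv decomp; set d := spectral_diag M in qv decomp.
have d_real i : d 0 i \is Num.real.
  exact/mxOverP/hermitian_spectral_diag_real/herm_mxE/linpencil_herm.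
have card2 : #|diag_support d| = 2%N.
  by apply/eqP; apply: contraTT qv_gt0; rewrite qv => /negbTE->; rewrite mulr0n ltxx.
rewrite card2 eqxx mulr1n in qv.
have [i iS] : exists i, i \in diag_support d by apply/card_gt0P; rewrite card2.
have di_neq0 : d 0 i != 0 by rewrite inE in iS.
have vi_real := real_entriesZ (d_real i) v_real.
have decomp_i := scale_unitary_diag decomp (d 0 i).
exists (d 0 i *: v); rewrite linpencilZ; split=> //; split.
- have herm_i : herm_mx (d 0 i *: M) by rewrite -linpencilZ; exact: linpencil_herm.
  apply/(psd_unitary_diagP (spectral_unitarymx M) decomp_i herm_i) => l.
  by rewrite mxE support2_common_sign // -qv.
- by rewrite (mxrank_unitary_diag (spectral_unitarymx M) decomp_i) diag_supportZ.
Qed.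

Lemma qform_gt0_of_full_cone x : real_entries x ->
  psd_mx (linpencil As x) -> \rank (linpencil As x) = 2%N -> 0 < (x^T *m A *m x) 0 0.
Proof.
move=> x_real L_psd L_rank; have qx : _ = _ := qform_spectral_diag x_real.
have L_herm := linpencil_herm x_real.
have decomp := herm_spectral_decomp L_herm.
have d_ge0 := (psd_unitary_diagP (spectral_unitarymx _) decomp L_herm).1 L_psd.
rewrite (mxrank_unitary_diag (spectral_unitarymx _) decomp) in L_rank.
rewrite qx L_rank eqxx mulr1n.
by apply: prodr_gt0 => l; rewrite inE lt_def => ->; rewrite d_ge0.
Qed.

End Pencil.

Local Close Scope sesquilinear_scope.

Theorem mainTheorem7 (C : numClosedFieldType) (n k : nat)
  (A : 'M[C]_n) (b : 'cV[C]_n) (As : 'I_n -> 'M[C]_k)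
  (hAreal : real_entries A) (hAsym : A^T = A) (hA0 : A != 0)
  (hbreal : real_entries b)
  (hAs : forall j, herm_mx (As j))
  (hrep : forall x : 'cV[C]_n, real_entries x ->
            quadpoly A b x = \det (1%:M + linpencil As x)) :
  ~ contains_full_cone As 2 <-> nsd_mx A.
Proof.
split=> [no_cone v v_real | A_nsd [x [x_real [L_psd L_rank]]]].
- rewrite real_leNgt ?real0 ?real_qform //; apply/negP => qv_gt0.
  exact/no_cone/(full_cone_of_qform_gt0 hAs hrep v_real).
- have := A_nsd x x_real; rewrite lt_geF //.
  exact: (qform_gt0_of_full_cone hAs hrep x_real).
Qed.
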